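(* Let $n,m$ be positive integers. Every winning sequence of moves $y_1,\dots,y_N$ in the $(n,m)$-game has length $N\ge m^n-1$; equivalently, no sequence of fewer than $m^n-1$ moves is winning.
   Context: The $(n,m)$-game: $n$ counters at positions $1,\dots,n$ (vertices in cyclic order of a regular $n$-gon table), each showing an element of $\mathbb{Z}_m$; a configuration is a vector in $\mathbb{Z}_m^n$, initially arbitrary and unknown. Each turn the player chooses a move $y\in\mathbb{Z}_m^n$ added coordinatewise, then the table is rotated by an adversarially chosen $k\in\mathbb{Z}_n$ (possibly $k=0$), replacing $x$ by $x'$ with $x'_{i+k}=x_i$ (indices mod $n$). The player wins if at some moment (including initially) all counters show $0$. A strategy is a finite sequence of moves; it is winning if it forces the zero configuration at some time for every initial configuration and every choice of rotations. *)

From HB Require Import structures.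
From mathcomp Require Import all_boot all_order all_algebra.
Set Implicit Arguments. Unset Strict Implicit. Unset Printing Implicit Defensive.
Import GRing.Theory.
Local Open Scope ring_scope.

(* Positions are 'I_n (written
   'I_(n.-1).+1 so that it carries the cyclic group structure Z_n; for n > 0
   this type is 'I_n), counter values are Z_m, likewise 'I_(m.-1).+1. *)
Definition pos (n : nat) := 'I_(n.-1).+1.
Definition val_t (m : nat) := 'I_(m.-1).+1.

Definition config (n m : nat) := {ffun pos n -> val_t m}.

Definition zero_config (n m : nat) : config n m := [ffun _ => 0].

Definition add_move (n m : nat) (x y : config n m) : config n m :=
  [ffun i => x i + y i].

Definition rotate (n m : nat) (k : pos n) (x : config n m) : config n m :=
  [ffun j => x (j - k)].

(* configuration after t turns, starting at x, with moves ys and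
   rotations ks t chosen by the adversary at turn t (0-indexed) *)
Fixpoint state (n m : nat) (x : config n m) (ys : seq (config n m))
  (ks : nat -> pos n) (t : nat) : config n m :=
  match t with
  | 0 => x
  | t'.+1 => rotate (ks t') (add_move (state x ys ks t') (nth (zero_config n m) ys t'))
  end.

(* A finite sequence of moves is winning if for every initial configuration
   and every choice of rotations the zero configuration occurs at some time
   0 <= t <= size ys (rotations do not affect being zero, so checking after
   each full turn suffices). *)
Definition winning (n m : nat) (ys : seq (config n m)) : Prop :=
  forall (x : config n m) (ks : nat -> pos n),
    exists2 t, (t <= size ys)%N & state x ys ks t = zero_config n m.

(* For any fixed sequence of rotations, the configuration after t turns is a
   bijective image of the initial one, so at most one initial configuration
   shows zero at time t.  A winning strategy of length N must bring each of
   the m^n initial configurations to zero at one of the N + 1 times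
   0, ..., N, hence m^n <= N + 1; the adversary need not even rotate. *)

From mathcomp Require Import all_boot all_order all_algebra.
Import GRing.Theory.

Lemma add_move_inj {n m : nat} (y : config n m) :
  injective (fun x => add_move x y).
Proof.
move=> x x' /ffunP exx'; apply/ffunP => i.
by have := exx' i; rewrite !ffunE => /addIr.
Qed.

Lemma rotate_inj {n m : nat} (k : pos n) : injective (@rotate n m k).
Proof.
move=> x x' /ffunP exx'; apply/ffunP => i.
by have := exx' (i + k)%R; rewrite !ffunE addrK.
Qed.

Lemma state_inj {n m : nat} (ys : seq (config n m)) (ks : nat -> pos n)
    (t : nat) :
  injective (fun x => state x ys ks t).
Proof.
elim: t => [//|t IHt] x x' /= /rotate_inj /add_move_inj.
exact: IHt.
Qed.

Lemma card_le_hitting_times (T : finType) (U : eqType) (f : nat -> T -> U)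
    (z : U) (N : nat) :
  (forall t, injective (f t)) ->
  (forall x, exists2 t, (t <= N)%N & f t x = z) ->
  (#|T| <= N.+1)%N.
Proof.
move=> f_inj hits.
pose hit x (t : 'I_N.+1) := f t x == z.
have hitP x : exists t, hit x t.
  by have [t le_tN ftx] := hits x; exists (Ordinal (le_tN : (t < N.+1)%N)); apply/eqP.
pose first_hit x := odflt ord0 [pick t | hit x t].
have first_hitP x : hit x (first_hit x).
  rewrite /first_hit; case: pickP => [//|no_hit].
  by have [t] := hitP x; rewrite no_hit.
have first_hit_inj : injective first_hit.
  move=> x x' same; apply: (f_inj (first_hit x)).
  by rewrite (eqP (first_hitP x)) same (eqP (first_hitP x')).
by rewrite -[N.+1]card_ord; apply: leq_card first_hit_inj.
Qed.

Theorem theorem5p1 (n m : nat) (hn : (0 < n)%N) (hm : (0 < m)%N)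
  (ys : seq (config n m)) :
  winning ys -> (m ^ n - 1 <= size ys)%N.
Proof.
move=> win.
pose no_rotation (_ : nat) : pos n := ord0.
have := @card_le_hitting_times {ffun pos n -> val_t m} _
  (fun t x => state x ys no_rotation t) (zero_config n m) (size ys)
  (state_inj ys no_rotation) (fun x => win x no_rotation).
by rewrite card_ffun !card_ord /pos /val_t !prednK // leq_subLR add1n.
Qed.
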